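(* In the setting of the procedure below, the total number of arithmetic operations (divisions, multiplications and subtractions) needed to compute $K^{(N)}_{CC}$ is $O\bigl(\sum_{m=1}^M |R^*_m|\,|C^*_m|^2\bigr)$. In particular, for the $n$-cycle model ($\Delta=\{1,\dots,n\}$, $n\ge 4$, maximal cliques $\{1,2\},\{2,3\},\dots,\{n-1,n\},\{n,1\}$) and any maximal clique $C$, there is a chordal extension and a perfect sequence with $C\subseteq C^*_1$ for which $M=n-2$, $|C^*_m|=3$ and $|R^*_m|=1$ for all $m$, so $((K^{-1})_{CC})^{-1}$ is computed with $O(n)$ arithmetic operations. The procedure: given a graph $\mathcal{G}=(\Delta,E)$, $K\in\mathcal{M}^+(\mathcal{G})$, a maximal clique $C$ of $\mathcal{G}$, a chordal extension $\mathcal{G}^*$ of $\mathcal{G}$ with perfect sequence of maximal cliques $C^*_1,\dots,C^*_M$ satisfying $C\subseteq C^*_1$, $S^*_m:=C^*_m\cap(C^*_1\cup\dots\cup C^*_{m-1})$, $R^*_1:=C^*_1\setminus C$, $R^*_m:=C^*_m\setminus S^*_m$ ($m\ge2$); enumerate $\Delta\setminus C$ as $\delta_1,\dots,\delta_N$ listing $R^*_M$ first, then $R^*_{M-1}$, …, finally $R^*_1$; set $K^{(0)}=K$ and for $i=1,\dots,N$, with $\delta=\delta_i\in R^*_m$ and $Q=C^*_m\setminus\{\delta_1,\dots,\delta_i\}$, replace the $Q\times Q$ block by $K^{(i-1)}_{QQ}-(k^{(i-1)}_{\delta\delta})^{-1}K^{(i-1)}_{Q\delta}K^{(i-1)}_{\delta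 Q}$.
   Context: For a graph $\mathcal{G}=(\Delta,E)$, $\mathcal{M}^+(\mathcal{G})$ denotes the set of $|\Delta|\times|\Delta|$ real symmetric positive definite matrices $K=(k_{ij})$ with $k_{ij}=0$ whenever $i\neq j$ and $\{i,j\}\notin E$. $A_{\Delta_1\Delta_2}$ denotes the submatrix with rows in $\Delta_1$ and columns in $\Delta_2$. A chordal extension of $\mathcal{G}$ is a chordal graph on $\Delta$ containing all edges of $\mathcal{G}$. A sequence $C^*_1,\dots,C^*_M$ of all maximal cliques of a chordal graph is perfect if for each $m\ge2$ some $m'<m$ has $C^*_{m'}\supseteq C^*_m\cap(C^*_1\cup\dots\cup C^*_{m-1})$. *)

From HB Require Import structures.
From mathcomp Require Import all_boot all_order all_algebra.
Set Implicit Arguments. Unset Strict Implicit. Unset Printing Implicit Defensive.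
Import Order.TTheory GRing.Theory Num.Theory.

Section Defs.
Variable n : nat.
Local Notation V := 'I_n.

Definition simple_graph (e : rel V) : Prop := symmetric e /\ irreflexive e.

Definition is_clique (e : rel V) (A : {set V}) : Prop :=
  forall x y, x \in A -> y \in A -> x != y -> e x y.

Definition maxclique (e : rel V) (A : {set V}) : Prop :=
  is_clique e A /\ forall B, is_clique e B -> A \subset B -> B = A.

Definition chordal (e : rel V) : Prop :=
  forall s : seq V, uniq s -> 4 <= size s -> cycle e s ->
    exists x y, [/\ x \in s, y \in s, e x y, y != next s x & x != next s y].

Definition chordal_extension (e e' : rel V) : Prop :=
  [/\ simple_graph e', (forall x y, e x y -> e' x y) & chordal e'].

Definition clique_seq (e : rel V) (Cs : seq {set V}) : Prop :=
  uniq Cs /\ forall A, A \in Cs <-> maxclique e A.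

(* 0-indexed: C*_{m+1} = nth set0 Cs m. *)
Definition Sstar (Cs : seq {set V}) (m : nat) : {set V} :=
  nth set0 Cs m :&: \bigcup_(j < m) nth set0 Cs j.

Definition perfect (Cs : seq {set V}) : Prop :=
  forall m, 0 < m < size Cs -> exists2 m', m' < m & Sstar Cs m \subset nth set0 Cs m'.

Definition Rstar (Cs : seq {set V}) (C : {set V}) (m : nat) : {set V} :=
  if m == 0 then nth set0 Cs 0 :\: C else nth set0 Cs m :\: Sstar Cs m.

Definition block (Cs : seq {set V}) (C : {set V}) (x : V) : nat :=
  find (fun m => x \in Rstar Cs C m) (iota 0 (size Cs)).

Definition valid_enum (Cs : seq {set V}) (C : {set V}) (d : seq V) : Prop :=
  perm_eq d (enum (~: C)) /\
  sorted (fun x y => block Cs C y <= block Cs C x) d.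

Definition in_Mplus (R : realFieldType) (e : rel V) (K : 'M[R]_n) : Prop :=
  [/\ (K^T = K)%R,
      (forall x : 'cV[R]_n, x != 0%R -> (0 < (x^T *m K *m x) 0 0)%R)
    & forall i j, i != j -> ~~ e i j -> K i j = 0%R].

Definition elim_step (R : realFieldType) (K : 'M[R]_n) (dl : V) (Q : {set V})
  : 'M[R]_n :=
  \matrix_(i, j) if (i \in Q) && (j \in Q)
                 then (K i j - (K dl dl)^-1 * K i dl * K dl j)%R else K i j.

(* Arithmetic operations of one step: 1 division (k_dd^-1), |Q| multiplications
   (k_dd^-1 K_Qd), |Q|^2 multiplications (outer product), |Q|^2 subtractions. *)
Definition step_ops (Q : {set V}) : nat := 1 + #|Q| + 2 * #|Q| ^ 2.

Fixpoint proc_rec (R : realFieldType) (Cs : seq {set V}) (C : {set V})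
  (K : 'M[R]_n) (done rest : seq V) : 'M[R]_n * nat :=
  match rest with
  | [::] => (K, 0)
  | x :: r =>
      let Q := nth set0 Cs (block Cs C x) :\: [set y in rcons done x] in
      let p := proc_rec Cs C (elim_step K x Q) (rcons done x) r in
      (p.1, step_ops Q + p.2)
  end.

Definition procedure (R : realFieldType) (Cs : seq {set V}) (C : {set V})
  (K : 'M[R]_n) (d : seq V) : 'M[R]_n * nat := proc_rec Cs C K [::] d.

End Defs.

Definition cycle_graph (n : nat) : rel 'I_n :=
  fun i j => (val j == (val i).+1 %% n) || (val i == (val j).+1 %% n).
Arguments cycle_graph n : clear implicits.

From HB Require Import structures.
From mathcomp Require Import all_boot all_order all_algebra zify.
Set Implicit Arguments. Unset Strict Implicit. Unset Printing Implicit Defensive.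

(* The step eliminating a vertex x of the block R*_m updates a
   set Q contained in the clique C*_m, hence costs at most
   1 + |C*_m| + 2 |C*_m|^2 <= 4 |C*_m|^2 operations (step_ops_mono,
   step_ops_le_sq).  When Cs lists all maximal cliques, every vertex outside C
   lies in a block (block_lt), and a duplicate-free enumeration contains at
   most |R*_m| vertices of block m (count_block_le); regrouping the step costs
   by block (sum_by_label) gives 4 * sum_m |R*_m| |C*_m|^2 (procedure_cost).

   The n-cycle, n >= 4.  Its maximal cliques are the edges {a, a + 1}
   (cycle_maxclique).  For C = {a, a + 1} we use the fan triangulation from the
   apex a, whose maximal cliques are the triangles {a, a+k+1, a+k+2}, k < n - 2.
   It is chordal: a long cycle through the apex has a chord at the apex
   (universal_chord), and the fan minus its apex is a path, which has no cycle
   (labelled_acyclic).  The triangles form a perfect sequence of 3-cliques whose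
   blocks R*_m are single vertices, so the procedure costs at most
   4 * 9 * (n - 2) <= 36 n operations (mainTheorem3). *)

Section MaximalCliques.
Variables (n : nat) (e : rel 'I_n).

(* Boolean reflection of [is_clique], so that cliques can be maximised over. *)
Definition cliqueb (A : {set 'I_n}) : bool :=
  [forall y in A, forall z in A, (y != z) ==> e y z].

Lemma cliquebP A : reflect (is_clique e A) (cliqueb A).
Proof.
apply: (iffP forall_inP) => [cl y z yA zA yz|cl y yA].
  by move/forall_inP/(_ z zA)/implyP: (cl y yA); apply.
by apply/forall_inP => z zA; apply/implyP; apply: cl.
Qed.

(* Every vertex lies in some maximal clique: take a largest clique containing it. *)
Lemma ex_maxclique x : exists2 B, maxclique e B & x \in B.
Proof.
have clx : cliqueb [set x] && (x \in [set x]).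
  rewrite set11 andbT; apply/cliquebP => y z.
  by rewrite !inE => /eqP-> /eqP->; rewrite eqxx.
have [B /andP[/cliquebP clB xB] Bmax] :=
  arg_maxnP (fun B : {set _} => #|B|) (P := fun B => cliqueb B && (x \in B)) clx.
exists B => //; split => // B' clB' BB'.
apply/eqP; rewrite eq_sym eqEcard BB' /=.
by apply: Bmax; rewrite (subsetP BB') // andbT; apply/cliquebP.
Qed.

End MaximalCliques.

Lemma sum_by_label (T : eqType) (g : T -> nat) (F : nat -> nat) k (s : seq T) :
  {in s, forall x, g x < k} ->
  \sum_(x <- s) F (g x) = \sum_(m < k) count (fun x => g x == m) s * F m.
Proof.
move=> gk.
under [RHS]eq_bigr do rewrite -sum1_count big_distrl /=.
rewrite (exchange_big_dep xpredT) //= big_seq [RHS]big_seq; apply: eq_bigr => x xs.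
by rewrite (big_pred1 (Ordinal (gk x xs))) ?mul1n.
Qed.

Lemma step_ops_mono n (A B : {set 'I_n}) : A \subset B -> step_ops A <= step_ops B.
Proof.
move=> /subset_leq_card AB.
by rewrite /step_ops leq_add ?leq_add2l // leq_mul2l leq_exp2r ?AB ?orbT.
Qed.

Lemma step_ops_le_sq n (A : {set 'I_n}) : 0 < #|A| -> step_ops A <= 4 * #|A| ^ 2.
Proof. rewrite /step_ops; set s := #|A|; nia. Qed.

Section Procedure.
Variables (n : nat) (Cs : seq {set 'I_n}) (C : {set 'I_n}).

Lemma Rstar_sub m : Rstar Cs C m \subset nth set0 Cs m.
Proof. by rewrite /Rstar; case: eqP => [->|_]; apply: subsetDl. Qed.

Lemma block_Rstar x m : m < size Cs -> block Cs C x = m -> x \in Rstar Cs C m.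
Proof.
move=> mCs bx.
have hasR : has (fun m => x \in Rstar Cs C m) (iota 0 (size Cs)).
  by rewrite has_find size_iota -/(block Cs C x) bx.
by have := nth_find 0 hasR; rewrite -/(block Cs C x) bx nth_iota.
Qed.

(* When [Cs] lists all maximal cliques, the blocks R*_m cover Delta \ C:
   x lies in R*_m for the first clique C*_m containing it. *)
Lemma block_lt e x : clique_seq e Cs -> x \notin C -> block Cs C x < size Cs.
Proof.
move=> [_ CsP] xC.
have [B /CsP BCs xB] := ex_maxclique e x.
have exm : exists m, (m < size Cs) && (x \in nth set0 Cs m).
  by exists (index B Cs); rewrite index_mem BCs nth_index.
have [m /andP[mCs xm] mmin] := ex_minnP exm.
have xRm : x \in Rstar Cs C m.
  rewrite /Rstar; case: eqP => [m0|_]; first by rewrite in_setD xC -m0 xm.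
  rewrite in_setD xm andbT in_setI xm /=; apply/bigcupP => -[j _ xj].
  have := mmin j; rewrite (ltn_trans (ltn_ord j) mCs) xj => /(_ isT).
  by rewrite leqNgt ltn_ord.
have hasR : has (fun m => x \in Rstar Cs C m) (iota 0 (size Cs)).
  by apply/hasP; exists m; rewrite ?mem_iota.
by move: hasR; rewrite has_find size_iota.
Qed.

(* The step eliminating x updates a subset of the clique C*_m of its block. *)
Lemma proc_rec_cost (R : realFieldType) (K : 'M[R]_n) (done rest : seq 'I_n) :
  (proc_rec Cs C K done rest).2
    <= \sum_(x <- rest) step_ops (nth set0 Cs (block Cs C x)).
Proof.
elim: rest K done => [|x rest IH] K done /=; first by rewrite big_nil.
by rewrite big_cons leq_add ?IH // step_ops_mono ?subsetDl.
Qed.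

Lemma count_block_le (d : seq 'I_n) m : uniq d -> m < size Cs ->
  count (fun x => block Cs C x == m) d <= #|Rstar Cs C m|.
Proof.
move=> ud mCs; rewrite -size_filter cardE uniq_leq_size ?filter_uniq // => x.
by rewrite mem_filter mem_enum => /andP[/eqP /(block_Rstar mCs)].
Qed.

Theorem procedure_cost (R : realFieldType) e (K : 'M[R]_n) (d : seq 'I_n) :
  clique_seq e Cs -> valid_enum Cs C d ->
  (procedure Cs C K d).2
    <= 4 * \sum_(m < size Cs) #|Rstar Cs C m| * #|nth set0 Cs m| ^ 2.
Proof.
move=> CsP [dC _].
have ud : uniq d by rewrite (perm_uniq dC) enum_uniq.
have dnC x : x \in d -> x \notin C by rewrite (perm_mem dC) mem_enum inE.
have blt x : x \in d -> block Cs C x < size Cs by move/dnC; apply: block_lt CsP.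
apply: leq_trans (proc_rec_cost K [::] d) _.
apply: (@leq_trans (\sum_(x <- d) 4 * #|nth set0 Cs (block Cs C x)| ^ 2)).
  rewrite big_seq [X in _ <= X]big_seq leq_sum // => x xd.
  rewrite step_ops_le_sq //; apply/card_gt0P; exists x.
  exact: subsetP (Rstar_sub _) x (block_Rstar (blt x xd) erefl).
rewrite (sum_by_label (fun m => 4 * #|nth set0 Cs m| ^ 2) blt) big_distrr leq_sum // => m _.
by rewrite mulnCA leq_mul2l leq_mul2r count_block_le ?orbT.
Qed.

End Procedure.

Section ChordsOfCycles.
Variables (T : eqType) (e : rel T).

Lemma universal_chord c s : uniq s -> 4 <= size s -> c \in s ->
  (forall y, y != c -> e c y) ->
  exists x y, [/\ x \in s, y \in s, e x y, y != next s x & x != next s y].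
Proof.
move=> us ss cs ce.
have [t rs] : exists t, rot (index c s) s = c :: t by eexists; apply: rot_index.
have us' : uniq (c :: t) by rewrite -rs rot_uniq.
have ss' : 4 <= size (c :: t) by rewrite -rs size_rot.
have ms y : (y \in s) = (y \in c :: t) by rewrite -rs mem_rot.
have nx y : next s y = next (c :: t) y by rewrite -rs next_rot.
clear rs.
case: t => [|u [|y [|w t]]] // in us' ss' ms nx *.
move: us'; rewrite /= !inE !negb_or -!andbA => /and4P[_ cy cw /and4P[_ uy _ _]].
exists c, y; split.
- exact: cs.
- by rewrite ms !inE eqxx !orbT.
- by apply: ce; rewrite eq_sym.
- by rewrite nx /= eqxx eq_sym.
- by rewrite nx /= [y == c]eq_sym (negbTE cy) [y == u]eq_sym (negbTE uy) eqxx.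
Qed.

Lemma labelled_acyclic (f : T -> nat) s :
  {in s &, injective f} ->
  {in s &, forall x y, e x y -> (f y == (f x).+1) || (f x == (f y).+1)} ->
  uniq s -> 3 <= size s -> ~~ cycle e s.
Proof.
move=> finj fe us ss; apply/negP => cyc.
have [z0 z0s] : exists z, z \in s.
  by case: s ss {us cyc finj fe} => [|z s] // _; exists z; apply: mem_head.
have [w ws wmax] : exists2 w, w \in s & forall z, z \in s -> f z <= f w.
  have hasf : exists m, has (fun x => f x == m) s by exists (f z0); apply/hasP; exists z0.
  have fbound m : has (fun x => f x == m) s -> m <= \max_(x <- s) f x.
    by case/hasP=> x xs /eqP<-; apply: leq_bigmax_seq.
  have [m /hasP[w ws /eqP<-] mmax] := ex_maxnP hasf fbound.
  by exists w => // z zs; apply: mmax; apply/hasP; exists z.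
have [t rs] : exists t, rot (index w s) s = w :: t by eexists; apply: rot_index.
have ms y : (y \in s) = (y \in w :: t) by rewrite -rs mem_rot.
have us' : uniq (w :: t) by rewrite -rs rot_uniq.
have ss' : 3 <= size (w :: t) by rewrite -rs size_rot.
have cyc' : cycle e (w :: t) by rewrite -rs rot_cycle.
clear rs; case: t => [|u [|z t]] // in ms us' ss' cyc' *.
move: cyc'; rewrite /= rcons_path => /and4P[ewu _ _ evw].
have vin : last z t \in z :: t by apply: mem_last.
have uS : u \in s by rewrite ms !inE eqxx orbT.
have vs : last z t \in s by rewrite ms in_cons (in_cons u) vin !orbT.
have fu : f w = (f u).+1.
  by move: (fe _ _ ws uS ewu) (wmax _ uS); case: eqP => [->|_ /eqP//]; rewrite ltnn.
have fv : f w = (f (last z t)).+1.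
  by move: (fe _ _ vs ws evw) (wmax _ vs); case: eqP => [/eqP//|_ /eqP->]; rewrite ltnn.
have uv : u = last z t by apply: finj => //; apply/eqP; rewrite -eqSS -fu -fv.
by move: us'; rewrite /= uv vin andbF.
Qed.

End ChordsOfCycles.

Definition cycle_succ n (i : 'I_n) : 'I_n :=
  Ordinal (ltn_pmod i.+1 (leq_ltn_trans (leq0n i) (ltn_ord i))).

Definition offset n (a j : 'I_n) : nat := (j + (n - a)) %% n.

Definition at_offset n (a : 'I_n) (k : nat) : 'I_n :=
  Ordinal (ltn_pmod (k + a) (leq_ltn_trans (leq0n a) (ltn_ord a))).

Section Offsets.
Variables (n : nat) (a : 'I_n).

Lemma cycle_graphE i j :
  cycle_graph n i j = (j == cycle_succ i) || (i == cycle_succ j).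
Proof. by []. Qed.

Lemma offset_lt j : offset a j < n.
Proof. by rewrite ltn_pmod // (leq_ltn_trans _ (ltn_ord a)). Qed.

Lemma offset_inj : injective (offset a).
Proof.
move=> i j /eqP; rewrite /offset eqn_modDr !modn_small // => /eqP.
exact: val_inj.
Qed.

Lemma offset_self : offset a a = 0.
Proof. by rewrite /offset subnKC ?modnn // ltnW. Qed.

Lemma offset0 j : (offset a j == 0) = (j == a).
Proof.
by apply/eqP/eqP => [j0|->]; [apply: offset_inj; rewrite j0 offset_self | exact: offset_self].
Qed.

Lemma offset_at k : k < n -> offset a (at_offset a k) = k.
Proof.
move=> kn; rewrite /offset /= modnDml -addnA subnKC 1?ltnW //.
by rewrite modnDr modn_small.
Qed.

Lemma offsetE j k : k < n -> (offset a j == k) = (j == at_offset a k).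
Proof.
move=> kn; apply/eqP/eqP => [jk|->]; last exact: offset_at.
by apply: offset_inj; rewrite offset_at.
Qed.

Lemma at_offset_eq k k' : k < n -> k' < n -> (at_offset a k == at_offset a k') = (k == k').
Proof. by move=> kn k'n; rewrite -offsetE // offset_at. Qed.

Lemma offset_succ j : offset a (cycle_succ j) = (offset a j).+1 %% n.
Proof. by rewrite /offset /= modnDml -[in RHS]addn1 modnDml addn1 addSn. Qed.

Lemma cycle_succ_inj : injective (@cycle_succ n).
Proof.
move=> i j /(congr1 val) /= /eqP.
by rewrite -[i.+1]addn1 -[j.+1]addn1 eqn_modDr !modn_small // => /eqP /val_inj.
Qed.

Lemma offset_iter_succ k : k < n -> offset a (iter k (@cycle_succ n) a) = k.
Proof.
elim: k => [|k IH] kn /=; first exact: offset_self.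
by rewrite offset_succ IH ?modn_small // ltnW.
Qed.

Lemma iter_succ_neq k : 0 < k < n -> iter k (@cycle_succ n) a != a.
Proof.
case/andP=> k0 kn; apply/eqP => /(congr1 (offset a)).
by rewrite offset_iter_succ // offset_self => k0'; rewrite k0' in k0.
Qed.

End Offsets.

Section CycleCliques.
Variables (n : nat) (n_gt3 : 3 < n).
Local Notation cg := (cycle_graph n).

Lemma edge_clique x : is_clique cg [set x; cycle_succ x].
Proof.
move=> y z; rewrite !inE => /orP[]/eqP-> /orP[]/eqP->; rewrite ?eqxx //= => _.
- by rewrite cycle_graphE eqxx.
- by rewrite cycle_graphE eqxx orbT.
Qed.

(* A clique containing an edge {x, x + 1} is that edge: a common neighbour w
   of x and x + 1 would force x + 3 = x. *)
Lemma clique_edge C x : is_clique cg C -> x \in C -> cycle_succ x \in C ->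
  C = [set x; cycle_succ x].
Proof.
move=> clC xC sxC; apply/setP => w; rewrite !inE; apply/idP/idP; last first.
  by case/orP=> /eqP->.
move=> wC; apply/negPn/negP; rewrite negb_or => /andP[wx wsx].
have := clC _ _ xC wC; rewrite eq_sym wx cycle_graphE (negbTE wsx) /=.
move=> /(_ isT) /eqP xw.
have := clC _ _ sxC wC; rewrite eq_sym wsx cycle_graphE => /(_ isT) /orP[/eqP wE|/eqP].
  by move: (@iter_succ_neq n x 3 n_gt3); rewrite /= -wE -xw eqxx.
by move/cycle_succ_inj => xw'; rewrite xw' eqxx in wx.
Qed.

Lemma cycle_maxclique C : maxclique cg C -> exists x, C = [set x; cycle_succ x].
Proof.
move=> [clC Cmax].
have [C0|[x xC]] := set_0Vmem C.
  pose x0 : 'I_n := Ordinal (ltn_trans (isT : 0 < 3) n_gt3).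
  have /Cmax : is_clique cg [set x0].
    by move=> y z; rewrite !inE => /eqP-> /eqP->; rewrite eqxx.
  by rewrite C0 sub0set => /(_ isT) /setP /(_ x0); rewrite !inE eqxx.
have [sxC|sxC] := boolP (cycle_succ x \in C); first by exists x; apply: clique_edge.
have [w wC wx] : exists2 w, w \in C & w != x.
  have [/subsetPn[w wC]|Cx] := boolP (~~ (C \subset [set x])).
    by rewrite inE => wx; exists w.
  have edgeC : [set x; cycle_succ x] = C.
    apply: Cmax; first exact: edge_clique.
    by apply: subset_trans (negbNE Cx) _; rewrite sub1set !inE eqxx.
  by rewrite -edgeC !inE eqxx orbT in sxC.
have := clC _ _ xC wC; rewrite eq_sym wx cycle_graphE => /(_ isT) /orP[/eqP wE|/eqP xE].
  by rewrite -wE wC in sxC.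
by exists w; apply: clique_edge; rewrite -?xE.
Qed.

End CycleCliques.

(* The fan triangulation of the n-cycle from the apex a: a is joined to every
   other vertex, and the remaining vertices form the path a+1, ..., a+n-1. *)
Definition fan n (a : 'I_n) : rel 'I_n := fun i j =>
  (i != j) && [|| offset a i == 0, offset a j == 0,
                  offset a j == (offset a i).+1 | offset a i == (offset a j).+1].

Definition fan_triangle n (a : 'I_n) (k : nat) : {set 'I_n} :=
  [set j | [|| offset a j == 0, offset a j == k.+1 | offset a j == k.+2]].

Definition fan_triangles n (a : 'I_n) : seq {set 'I_n} :=
  mkseq (fan_triangle a) (n - 2).

Section Fan.
Variables (n : nat) (n_gt3 : 3 < n) (a : 'I_n).

Lemma fan_sym : symmetric (fan a).
Proof.
move=> i j; rewrite /fan eq_sym; congr (_ && _).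
by case: (offset a i == 0); case: (offset a j == 0) => //=; rewrite orbC.
Qed.

Lemma fan_irr : irreflexive (fan a).
Proof. by move=> i; rewrite /fan eqxx. Qed.

Lemma cycle_sub_fan i j : cycle_graph n i j -> fan a i j.
Proof.
have fan_succ k : fan a k (cycle_succ k).
  rewrite /fan eq_sym (@iter_succ_neq n k 1) 1?(ltn_trans _ n_gt3) //=.
  rewrite offset_succ; have := offset_lt a k; rewrite leq_eqVlt => /orP[/eqP->|kn].
    by rewrite modnn eqxx orbT.
  by rewrite modn_small // eqxx !orbT.
by rewrite cycle_graphE => /orP[]/eqP->; rewrite ?[fan a (cycle_succ _) _]fan_sym fan_succ.
Qed.

Lemma fan_apex j : j != a -> fan a a j.
Proof. by move=> ja; rewrite /fan eq_sym ja offset_self eqxx. Qed.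

Lemma fan_off_apex i j : i != a -> j != a -> fan a i j ->
  (offset a j == (offset a i).+1) || (offset a i == (offset a j).+1).
Proof. by rewrite /fan -!offset0 => /negbTE-> /negbTE-> /andP[]. Qed.

(* Chordality: a long cycle through the apex has a chord at the apex, and
   offsets label the rest of the fan as a path, which contains no cycle. *)
Lemma fan_chordal : chordal (fan a).
Proof.
move=> s us ss cyc.
have [aS|aS] := boolP (a \in s); first exact: universal_chord us ss aS fan_apex.
have noa x : x \in s -> x != a by apply: contraTneq => ->.
have offs_inj : {in s &, injective (offset a)} by move=> x y _ _; apply: offset_inj.
have offs_path : {in s &, forall x y, fan a x y ->
    (offset a y == (offset a x).+1) || (offset a x == (offset a y).+1)}.
  by move=> x y xs ys; apply: fan_off_apex; apply: noa.
by have := labelled_acyclic offs_inj offs_path us (ltnW ss); rewrite cyc.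
Qed.

Local Notation T := (fan_triangle a).

Lemma in_triangle j k :
  (j \in T k) = [|| offset a j == 0, offset a j == k.+1 | offset a j == k.+2].
Proof. by rewrite inE. Qed.

Lemma triangle_clique k : is_clique (fan a) (T k).
Proof.
move=> x y; rewrite !in_triangle => hx hy xy; rewrite /fan xy /=.
case/or3P: hx => /eqP hx; case/or3P: hy => /eqP hy; rewrite hx hy ?eqxx ?orbT //=;
by case/eqP: xy; apply: (offset_inj (a := a)); rewrite hx hy.
Qed.

(* Every clique of the fan lies in a triangle: besides the apex it can only
   contain the vertex of largest offset and its predecessor. *)
Lemma clique_in_triangle A : is_clique (fan a) A -> exists2 k, k < n - 2 & A \subset T k.
Proof.
move=> clA.
have [/existsP[w0 /andP[w0A w0o]]|none] := boolP [exists w in A, 1 < offset a w].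
  have [w wA wmax] : exists2 w, w \in A & forall z, z \in A -> offset a z <= offset a w.
    by have [w wA wmax] := arg_maxnP (offset a) (P := mem A) w0A; exists w.
  have w1 : 1 < offset a w by apply: leq_trans w0o (wmax _ w0A).
  exists (offset a w - 2); first by rewrite ltn_sub2r // (leq_trans _ (offset_lt a w)).
  apply/subsetP => j jA; rewrite in_triangle subnSK // subnSK ?(ltnW w1) // subn0.
  have [->|jw] := eqVneq j w; first by rewrite eqxx !orbT.
  have [->//|jnz] := eqVneq (offset a j) 0.
  have wnz : w != a by rewrite -offset0 -lt0n (ltn_trans _ w1).
  have ja : j != a by rewrite -offset0.
  have := fan_off_apex wnz ja (clA _ _ wA jA _); rewrite eq_sym jw => /(_ isT).
  by rewrite eqn_leq ltnNge wmax //= andbF /= => /eqP->; rewrite subn1 eqxx.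
exists 0; first by rewrite subn_gt0 (ltn_trans _ n_gt3).
apply/subsetP => j jA; rewrite in_triangle.
have : offset a j <= 1.
  by rewrite leqNgt; apply: contraNN none => j1; apply/existsP; exists j; rewrite jA.
by case: (offset a j) => [|[|]].
Qed.

(* Distinct triangles are incomparable, as witnessed by their two non-apex vertices. *)
Lemma triangle_sub k k' : k < n - 2 -> T k \subset T k' -> k = k'.
Proof.
move=> kn /subsetP kk'.
have k2 : k.+2 < n by lia.
have := kk' (at_offset a k.+1); rewrite !in_triangle offset_at 1?ltnW // eqxx orbT => /(_ isT).
have := kk' (at_offset a k.+2); rewrite !in_triangle offset_at // eqxx !orbT => /(_ isT).
by rewrite /= !eqSS => /orP[]/eqP h1 /orP[]/eqP h2; lia.
Qed.

Lemma succ_apex : cycle_succ a = at_offset a 1.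
Proof.
apply/eqP; rewrite -offsetE; last lia.
by apply/eqP; apply: (@offset_iter_succ n a 1); lia.
Qed.

Lemma apex_edge_sub : [set a; cycle_succ a] \subset T 0.
Proof.
apply/subsetP => x; rewrite in_triangle !inE succ_apex => /orP[]/eqP->.
  by rewrite offset_self.
by rewrite offset_at ?eqxx ?orbT //; lia.
Qed.

Lemma nth_fan_triangles m : m < n - 2 -> nth set0 (fan_triangles a) m = T m.
Proof. by move=> mn; rewrite nth_mkseq. Qed.

Lemma fan_clique_seq : clique_seq (fan a) (fan_triangles a).
Proof.
split=> [|A].
  by apply/mkseq_uniqP => k k' kn k'n /= kk'; apply: triangle_sub kn _; rewrite kk'.
split.
  case/mapP => k; rewrite mem_iota /= => kn ->; split; first exact: triangle_clique.
  move=> B clB TB; have [k' k'n Bk'] := clique_in_triangle clB.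
  have kk' : k = k' by apply: triangle_sub kn (subset_trans TB Bk').
  by apply/eqP; rewrite eqEsubset TB andbT kk'.
move=> [clA Amax]; have [k kn Ak] := clique_in_triangle clA.
rewrite -(Amax _ (triangle_clique (k := k)) Ak).
by apply/mapP; exists k; rewrite ?mem_iota.
Qed.

(* Each triangle meets the earlier ones only in {a, a+k+1}, inside its predecessor. *)
Lemma fan_perfect : perfect (fan_triangles a).
Proof.
case=> [|m]; rewrite size_mkseq //= => mn; exists m => //.
rewrite /Sstar (nth_fan_triangles mn) (nth_fan_triangles (ltnW mn)).
apply/subsetP => x; rewrite in_setI => /andP[xm /bigcupP[j _]].
rewrite nth_fan_triangles; last by have := ltn_ord j; lia.
move: xm; rewrite !in_triangle; have := ltn_ord j.
by move=> jm; case/or3P=> /eqP->; rewrite ?eqxx ?orbT // => /or3P[]/eqP; lia.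
Qed.

Lemma triangle_card k : k < n - 2 -> #|T k| = 3.
Proof.
move=> kn; have k2 : k.+2 < n by lia.
have -> : T k = at_offset a 0 |: (at_offset a k.+1 |: [set at_offset a k.+2]).
  by apply/setP => x; rewrite in_triangle !inE !offsetE //; lia.
by rewrite !cardsU1 cards1 !inE !at_offset_eq //; lia.
Qed.

(* For C = {a, a + 1}, each block R*_m (0-indexed) is the single vertex a + m + 2:
   the vertex that triangle m adds to the earlier ones. *)
Lemma fan_Rstar m : m < n - 2 ->
  Rstar (fan_triangles a) [set a; cycle_succ a] m = [set at_offset a m.+2].
Proof.
move=> mn; have m2 : m.+2 < n by lia.
apply/setP => x; rewrite inE -offsetE // /Rstar.
case: m => [|m] in mn m2 *.
  rewrite /= in_setD nth_fan_triangles // in_triangle !inE -offset0 succ_apex.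
  rewrite -offsetE ?(ltn_trans _ n_gt3) //.
  by case: (offset a x) => [|[|[|]]].
rewrite /= in_setD /Sstar in_setI nth_fan_triangles // in_triangle.
have [x0|x0] := eqVneq (offset a x) 0.
  rewrite x0 /= andbT; apply/negbTE/negPn/bigcupP; exists ord0 => //.
  by rewrite nth_fan_triangles ?in_triangle ?x0 //= (leq_ltn_trans _ mn).
have [x1|x1] := eqVneq (offset a x) m.+2.
  rewrite x1 /= !eqSS (ltn_eqF (ltnSn m)) andbT.
  apply/negbTE/negPn/bigcupP; exists (Ordinal (ltnSn m)) => //.
  by rewrite nth_fan_triangles ?in_triangle ?x1 ?eqxx ?orbT //=; lia.
rewrite /=; case: eqP => [x3|_]; last by rewrite andbF.
rewrite andbT /=; apply/negP => /bigcupP[j _].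
rewrite nth_fan_triangles ?in_triangle ?x3; last by have := ltn_ord j; lia.
by have := ltn_ord j; move=> jm /or3P[]/eqP; lia.
Qed.

End Fan.

Theorem mainTheorem3 :
  exists c c' : nat,
  (forall (R : realFieldType) (n : nat) (e : rel 'I_n) (K : 'M[R]_n)
     (C : {set 'I_n}) (e' : rel 'I_n) (Cs : seq {set 'I_n}) (d : seq 'I_n),
     simple_graph e -> in_Mplus e K -> maxclique e C ->
     chordal_extension e e' -> clique_seq e' Cs -> perfect Cs ->
     C \subset nth set0 Cs 0 -> valid_enum Cs C d ->
     (procedure Cs C K d).2
       <= c * \sum_(m < size Cs) #|Rstar Cs C m| * #|nth set0 Cs m| ^ 2)
  /\
  (forall n : nat, 4 <= n -> forall C : {set 'I_n}, maxclique (cycle_graph n) C ->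
     exists (e' : rel 'I_n) (Cs : seq {set 'I_n}),
       [/\ chordal_extension (cycle_graph n) e', clique_seq e' Cs, perfect Cs
          & C \subset nth set0 Cs 0] /\
       [/\ size Cs = n - 2,
           (forall m, m < size Cs -> #|nth set0 Cs m| = 3)
         & (forall m, m < size Cs -> #|Rstar Cs C m| = 1)] /\
       (forall (R : realFieldType) (K : 'M[R]_n) (d : seq 'I_n),
          in_Mplus (cycle_graph n) K -> valid_enum Cs C d ->
          (procedure Cs C K d).2 <= c' * n)).
Proof.
exists 4, 36; split.
  by move=> R n e K C e' Cs d _ _ _ _ CsP _ _ dP; apply: procedure_cost CsP dP.
move=> n n_gt3 C /(cycle_maxclique n_gt3) [a ->].
have size_fan : size (fan_triangles a) = n - 2 by rewrite size_mkseq.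
have card3 m : m < size (fan_triangles a) -> #|nth set0 (fan_triangles a) m| = 3.
  by rewrite size_fan => mn; rewrite nth_fan_triangles // triangle_card.
have Rstar1 m : m < size (fan_triangles a) ->
    #|Rstar (fan_triangles a) [set a; cycle_succ a] m| = 1.
  by rewrite size_fan => mn; rewrite fan_Rstar // cards1.
exists (fan a), (fan_triangles a); split; [split|split] => //.
- split; [split | exact: cycle_sub_fan | exact: fan_chordal].
    exact: fan_sym.
  exact: fan_irr.
- exact: fan_clique_seq.
- exact: fan_perfect.
- by rewrite nth_fan_triangles ?apex_edge_sub //; lia.
move=> R K d _ dP; apply: leq_trans (procedure_cost K (fan_clique_seq n_gt3 a) dP) _.
rewrite (eq_bigr (fun _ => 9)) => [|m _]; last by rewrite Rstar1 // card3.
by rewrite sum_nat_const card_ord size_fan; lia.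
Qed.
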